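(* Let $\widehat{\Gamma}$ be a Harnack graph with controlled, uniformly lazy weights $(\pi,\mu)$. Let $K$ be a set of vertices of $\widehat{\Gamma}$ and $\Gamma:=\widehat{\Gamma}\setminus K$ (so $\partial\Gamma\subseteq K$). For $x\in\widehat{\Gamma}$ and $r>0$ set $B_{\partial\Gamma}(x,r)=B_{\widehat\Gamma}(x,r)\cap\partial\Gamma$, $V_{\partial\Gamma}(x,r)=\pi(B_{\partial\Gamma}(x,r))$, and for $x\in\Gamma$ set \[W(x,r):=\frac{V_{\widehat\Gamma}(x,r)}{V_{\partial\Gamma}(x,r)}.\] Then there is a constant $C$ such that, with $d_x:=d(x,K)$, \[\psi_K(x)\le \sum_{n\ge d_x^2}\frac{C}{W(x,\sqrt n)}\qquad\text{for all } x\in\Gamma\setminus\partial_I\Gamma.\]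
   Context: $\widehat{\Gamma}=(\widehat V,\widehat E)$ is an infinite simple connected graph with symmetric edge weights $\mu_{xy}=\mu_{yx}$, $\mu_{xy}\ne0$ iff $x\sim y$, vertex weights $\pi>0$ with $\sum_{y\sim x}\mu_{xy}\le\pi(x)$; Markov kernel $\mathcal{K}(x,y)=\mu_{xy}/\pi(x)$ ($x\neq y$), $\mathcal{K}(x,x)=1-\sum_{z\sim x}\mu_{xz}/\pi(x)$. Controlled weights: $\exists C_c>1$ with $\mu_{xy}/\pi(x)\ge1/C_c$ for all $y\sim x$. Uniformly lazy: $\exists C_e\in(0,1)$ with $\mathcal{K}(x,x)\ge C_e$ for all $x$. $d$ is the graph distance of $\widehat\Gamma$, $B_{\widehat\Gamma}(x,r)=\{y:d(x,y)\le r\}$, $V_{\widehat\Gamma}(x,r)=\pi(B_{\widehat\Gamma}(x,r))$. The heat kernel is $p(n,x,y)=\mathcal{K}^n(x,y)/\pi(y)$. $\widehat\Gamma$ is a Harnack graph if there are constants $c_1,c_2,c_3,c_4>0$ with $\frac{c_1}{V(x,\sqrt n)}e^{-d(x,y)^2/(c_2n)}\le p(n,x,y)\le\frac{c_3}{V(x,\sqrt n)}e^{-d(x,y)^2/(c_4 n)}$ for all $x,y$ and $n\ge d(x,y)$ (equivalently, volume doubling plus a Poincaré inequality). $\Gamma$ is the subgraph induced on $\widehat V\setminus K$; $\partial\Gamma$ is the set of vertices outside $\Gamma$ adjacent to $\Gamma$, and $\partial_I\Gamma$ the set of vertices of $\Gamma$ adjacent to a vertex outside $\Gamma$. $\psi_K(x)=\mathbb{P}^x(\tau_K<\infty)$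 where $\tau_K=\min\{n\ge0:X_n\in K\}$ for the random walk $(X_n)$ driven by $\mathcal{K}$. When $V_{\partial\Gamma}(x,r)=0$, $1/W(x,r)=0$. *)

From HB Require Import structures.
From mathcomp Require Import all_boot all_order all_algebra.
From mathcomp Require Import all_classical all_reals all_analysis.
Set Implicit Arguments. Unset Strict Implicit. Unset Printing Implicit Defensive.
Import Order.TTheory GRing.Theory Num.Theory.
Local Open Scope classical_set_scope.
Local Open Scope ring_scope.

Section WeightedGraph.
Variables (R : realType) (V : choiceType).
Variables (adj : V -> V -> Prop) (mu : V -> V -> R) (pi : V -> R).

Definition nbr_sum (x : V) : \bar R := \esum_(y in [set y | adj x y]) (mu x y)%:E.

Definition Kker (x y : V) : R :=
  if x == y then 1 - fine (nbr_sum x) / pi x else mu x y / pi x.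

Fixpoint Kpow (n : nat) (x y : V) : \bar R :=
  match n with
  | 0 => ((x == y)%:R)%:E
  | n'.+1 => \esum_(z in [set: V]) (Kpow n' x z * (Kker z y)%:E)%E
  end.

Definition heat (n : nat) (x y : V) : R := fine (Kpow n x y) / pi y.

Definition reach (x y : V) (n : nat) : Prop :=
  exists p : nat -> V, [/\ p 0%N = x, p n = y & forall i, (i < n)%N -> adj (p i) (p i.+1)].

Definition connected_graph : Prop := forall x y, exists n, reach x y n.

Definition gdist (x y : V) : nat :=
  xget 0%N [set n | reach x y n /\ forall m, reach x y m -> (n <= m)%N].

Definition gball (x : V) (r : R) : set V := [set y | (gdist x y)%:R <= r].
Definition vol (A : set V) : \bar R := \esum_(y in A) (pi y)%:E.
Definition Vball (x : V) (r : R) : R := fine (vol (gball x r)).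

Definition harnack_graph : Prop :=
  exists c1 c2 c3 c4 : R, [/\ 0 < c1, 0 < c2, 0 < c3, 0 < c4 &
    forall (n : nat) (x y : V), (gdist x y <= n)%N ->
      c1 / Vball x (Num.sqrt n%:R) * expR (- ((gdist x y)%:R ^+ 2) / (c2 * n%:R))
        <= heat n x y /\
      heat n x y <=
      c3 / Vball x (Num.sqrt n%:R) * expR (- ((gdist x y)%:R ^+ 2) / (c4 * n%:R))].

Definition weighted_graph : Prop :=
  ~ finite_set [set: V] /\
  (forall x, ~ adj x x) /\
  (forall x y, adj x y -> adj y x) /\
  connected_graph /\
  (forall x y, mu x y = mu y x) /\
  (forall x y, mu x y != 0 <-> adj x y) /\
  (forall x, 0 < pi x) /\
  (forall x, (nbr_sum x <= (pi x)%:E)%E).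

Definition controlled_weights : Prop :=
  exists Cc : R, 1 < Cc /\ forall x y, adj x y -> 1 / Cc <= mu x y / pi x.

Definition uniformly_lazy : Prop :=
  exists Ce : R, [/\ 0 < Ce, Ce < 1 & forall x, Ce <= Kker x x].

Variable K : set V.

(** exterior boundary of Gamma = V \ K and interior boundary *)
Definition dGamma : set V := [set y | K y /\ exists z, ~ K z /\ adj y z].
Definition dIGamma : set V := [set z | ~ K z /\ exists y, K y /\ adj z y].

Definition distK (x : V) : nat :=
  xget 0%N [set n | (exists k, K k /\ gdist x k = n) /\ forall k, K k -> (n <= gdist x k)%N].

(** P^x(tau_K <= n): sum over paths X_0 = x, ..., X_n visiting K *)
Definition hit_within (n : nat) (x : V) : \bar R :=
  \esum_(p in [set p : n.+1.-tuple V | tnth p ord0 = x /\ exists i, K (tnth p i)])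
    (\prod_(i < n) Kker (tnth p (inord i)) (tnth p (inord i.+1)))%:E.

(** psi_K(x) = P^x(tau_K < oo) *)
Definition psiK (x : V) : \bar R := ereal_sup (range (fun n => hit_within n x)).

(** 1/W(x,r) = V_{dGamma}(x,r) / V(x,r)  (equal to 0 when V_{dGamma}(x,r) = 0) *)
Definition invW (x : V) (r : R) : R :=
  fine (vol (gball x r `&` dGamma)) / Vball x r.

End WeightedGraph.

From HB Require Import structures.
From mathcomp Require Import all_boot all_order all_algebra.
From mathcomp Require Import all_classical all_reals all_analysis.
From mathcomp Require Import zify.
Set Implicit Arguments. Unset Strict Implicit. Unset Printing Implicit Defensive.
Import Order.TTheory GRing.Theory Num.Theory.
Local Open Scope classical_set_scope.
Local Open Scope ring_scope.

(* Before the walk started at x enters K it stands on the exterior boundary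
   dGamma, and since x is neither in K nor adjacent to K this takes at least
   two steps; hence psi_K(x) <= sum_(i >= 2) sum_(y in dGamma) K^i(x, y).
   For such i and y let j be the least integer with d(x, y)^2 <= 4^j i.  The
   Gaussian upper bound and j-fold volume doubling give
     K^i(x, y) <= c_j pi(y) 1_(B(x, sqrt (4^j i)))(y) / V(x, sqrt (4^j i))
   with c_j = c3 D^j exp(-4^(j-1) / c4), a summable sequence.  Summing over
   y in dGamma yields c_j / W(x, sqrt (4^j i)); as i |-> 4^j i is injective,
   the sum over i is at most c_j sum_n 1 / W(x, sqrt n), where the terms with
   n < d_x^2 vanish because B(x, sqrt n) then misses K.  Volume doubling
   itself follows from the Gaussian lower bound. *)

Section esum_lemmas.
Variable R : realType.
Local Open Scope ereal_scope.

Lemma fineK_le (e : \bar R) (c : R) : 0 <= e -> e <= c%:E -> (fine e)%:E = e.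
Proof. by move=> e0 ec; rewrite fineK// ge0_fin_numE// (le_lt_trans ec) ?ltry. Qed.

Lemma fineK_neq0 (e : \bar R) : fine e != 0%R -> (fine e)%:E = e.
Proof. by case: e => //=; rewrite eqxx. Qed.

Lemma le_esum_subset (T : choiceType) (A B : set T) (a : T -> \bar R) :
  A `<=` B -> (forall i, B i -> 0 <= a i) ->
  \esum_(i in A) a i <= \esum_(i in B) a i.
Proof.
move=> AB a0; rewrite esum_mkcond [leRHS]esum_mkcond; apply: le_esum => i _.
case: ifPn => [/set_mem/AB Bi|_]; first by rewrite ifT ?inE.
by case: ifPn => // /set_mem /a0.
Qed.

Lemma le_term_esum (T : choiceType) (S : set T) (a : T -> \bar R) x :
  S x -> (forall i, S i -> 0 <= a i) -> a x <= \esum_(i in S) a i.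
Proof.
move=> Sx a0; rewrite -(@esum_set1 _ _ x a (a0 _ Sx)).
by apply: le_esum_subset => // y ->.
Qed.

Lemma esumZl (T : choiceType) (S : set T) (a : T -> \bar R) (c : R) :
  (0 <= c)%R -> (forall i, S i -> 0 <= a i) ->
  \esum_(i in S) (c%:E * a i) = c%:E * \esum_(i in S) a i.
Proof.
move=> c0 a0; rewrite esum_mkcond [in RHS]esum_mkcond.
set b := fun i => if i \in S then a i else 0.
have b0 i : 0 <= b i by rewrite /b; case: ifPn => // /set_mem /a0.
rewrite (eq_esum (b := fun i => c%:E * b i)); last first.
  by move=> i _; rewrite /b; case: ifPn; rewrite ?mule0.
rewrite /esum -ereal_supZl//; last first.
  by apply/set0P; exists 0; exists set0; [exact: fsets_set0|rewrite fsbig_set0].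
congr ereal_sup; apply/seteqP; split => x /=.
  by move=> [A hA <-]; exists (\sum_(i \in A) b i); [exists A|rewrite ge0_mule_fsumr].
by move=> [_ [B hB <-] <-]; exists B => //; rewrite ge0_mule_fsumr.
Qed.

Lemma esumZr (T : choiceType) (S : set T) (a : T -> \bar R) (c : R) :
  (0 <= c)%R -> (forall i, S i -> 0 <= a i) ->
  \esum_(i in S) (a i * c%:E) = (\esum_(i in S) a i) * c%:E.
Proof.
by move=> c0 a0; rewrite muleC -esumZl//; apply: eq_esum => i _; exact: muleC.
Qed.

Lemma exchange_esum (T1 T2 : choiceType) (I : set T1) (J : set T2)
    (a : T1 -> T2 -> \bar R) :
  (forall i j, I i -> J j -> 0 <= a i j) ->
  \esum_(i in I) \esum_(j in J) a i j = \esum_(j in J) \esum_(i in I) a i j.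
Proof.
move=> a0; rewrite (esum_esum (J := fun=> J))//.
rewrite (esum_esum (I := J) (J := fun=> I)); last by move=> j i Jj Ii; exact: a0.
rewrite (reindex_esum (J `*`` fun=> I) (I `*`` fun=> J) (fun x => (x.2, x.1)))//.
split.
- by move=> [i j] [/= ? ?]; split.
- by move=> [i1 i2] [j1 j2] /= _ _ [] -> ->.
- by move=> [i j] [/= Ii Jj]; exists (j, i).
Qed.

Lemma esum_fibers (T1 T2 : choiceType) (S : set T1) (h : T1 -> T2)
    (g : T1 -> \bar R) :
  (forall t, S t -> 0 <= g t) ->
  \esum_(t in S) g t =
  \esum_(w in [set: T2]) \esum_(t in [set t | S t /\ h t = w]) g t.
Proof.
move=> g0; rewrite (esum_esum (I := [set: T2])
  (J := fun w => [set t | S t /\ h t = w]) (a := fun _ t => g t)); last first.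
  by move=> i j _ [Sj _]; exact: g0.
rewrite (reindex_esum ([set: T2] `*`` fun w => [set t | S t /\ h t = w]) S
   (fun k => k.2))//.
split.
- by move=> [w t] [_ /= []].
- by move=> [w1 t1] [w2 t2] /set_mem [_ /= [_ e1]] /set_mem [_ /= [_ e2]] /= et; subst.
- by move=> t St; exists (h t, t).
Qed.

Lemma esum_rcons (T : choiceType) (n : nat) (P : seq T -> Prop)
    (f : seq T -> \bar R) :
  (forall s, 0 <= f s) ->
  \esum_(s in [set s | size s = n.+1 /\ P s]) f s =
  \esum_(t in [set t : seq T | size t = n])
     \esum_(z in [set z | P (rcons t z)]) f (rcons t z).
Proof.
move=> f0; rewrite (esum_esum (I := [set t : seq T | size t = n])
  (J := fun t => [set z | P (rcons t z)]) (a := fun t z => f (rcons t z))) //.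
rewrite (reindex_esum ([set t : seq T | size t = n] `*`` fun t => [set z | P (rcons t z)])
   [set s | size s = n.+1 /\ P s] (fun k => rcons k.1 k.2))//.
split.
- by move=> [t z] [/= st Pz]; rewrite size_rcons st.
- move=> [t1 z1] [t2 z2] _ _ /= e.
  have := congr1 (@rev T) e; rewrite !rev_rcons => -[-> /(congr1 (@rev T))].
  by rewrite !revK => ->.
- move=> s [ss Ps]; move: ss Ps; case/lastP: s => [//|t z].
  by rewrite size_rcons => -[st] Ps; exists (t, z).
Qed.

Lemma esum_mule_le (T : choiceType) (S : set T) (a : T -> \bar R) (b : \bar R) (s : R) :
  (0 < s)%R -> 0 <= b -> (forall i, S i -> 0 <= a i) ->
  \esum_(i in S) a i <= s%:E -> \esum_(i in S) (a i * b) <= s%:E * b.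
Proof.
move=> s_gt0; case: b => [b| |] //= b0 a0 sum_le.
  by rewrite esumZr// lee_wpmul2r.
by rewrite gt0_muley ?lte_fin ?leey.
Qed.

End esum_lemmas.

Lemma expRN_le_fact (R : realType) (t : R) (k : nat) :
  0 < t -> expR (- t) <= k`!%:R / t ^+ k.
Proof.
move=> t0; rewrite expRN -[leRHS]invf_div.
rewrite lef_pV2 ?posrE ?expR_gt0 ?divr_gt0 ?exprn_gt0 ?ltr0n ?fact_gt0//.
case: k => [|k]; first by rewrite expr0 fact0 divr1 ltW ?expR_gt1.
by apply: le_trans (expR_ge1Dxn k (ltW t0)); rewrite lerDr.
Qed.

Lemma ler_nat_sqrt (R : realType) (g k : nat) :
  ((g%:R : R) <= Num.sqrt k%:R) = (g ^ 2 <= k)%N.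
Proof. by rewrite -[g%:R]ger0_norm// -sqrtr_sqr ler_sqrt// -natrX ler_nat. Qed.

Section graph_distance.
Variables (V : choiceType) (adj : V -> V -> Prop).

Lemma reach_refl x : reach adj x x 0.
Proof. by exists (fun=> x). Qed.

Lemma reach_rcons x z y m : reach adj x z m -> adj z y -> reach adj x y m.+1.
Proof.
move=> [p [p0 pm hp]] azy.
exists (fun i => if (i <= m)%N then p i else y); split.
- by rewrite leq0n.
- by rewrite ltnn.
- move=> i; rewrite ltnS => im; have [->|neq_im] := eqVneq i m.
    by rewrite leqnn ltnn pm.
  have lt_im : (i < m)%N by rewrite ltn_neqAle neq_im im.
  by rewrite im lt_im; apply: hp.
Qed.

Lemma distK_le (K : set V) x k : K k -> (distK adj K x <= gdist adj x k)%N.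
Proof.
move=> Kk.
have ex : exists n, `[< exists k, K k /\ gdist adj x k = n >].
  by exists (gdist adj x k); apply/asboolP; exists k.
case: (ex_minnP ex) => n /asboolP hn hmin.
have [] := xgetPex 0%N (P := [set n | (exists k, K k /\ gdist adj x k = n) /\
   forall k, K k -> (n <= gdist adj x k)%N]); last by move=> _; apply.
by exists n; split => // k' Kk'; apply: hmin; apply/asboolP; exists k'.
Qed.

Lemma gball_sqrt (R : realType) x y n :
  gball adj x (Num.sqrt n%:R : R) y <-> (gdist adj x y ^ 2 <= n)%N.
Proof. by rewrite /gball /= ler_nat_sqrt. Qed.

Hypothesis conn : connected_graph adj.

Lemma gdist_le x y m : reach adj x y m -> (gdist adj x y <= m)%N.
Proof.
have ex : exists n, `[< reach adj x y n >].
  by have [n rn] := conn x y; exists n; apply/asboolP.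
case: (ex_minnP ex) => n /asboolP rn hmin.
have [] := xgetPex 0%N (P := [set n | reach adj x y n /\
   forall k, reach adj x y k -> (n <= k)%N]); last by move=> _; apply.
by exists n; split => // k /asboolP /hmin.
Qed.

Lemma gdist_refl x : gdist adj x x = 0%N.
Proof. by apply/eqP; rewrite -leqn0; apply: gdist_le; exact: reach_refl. Qed.

End graph_distance.

Section dyadic_coefficients.
Variables (R : realType) (c3 c4 D : R).
Hypotheses (c3_gt0 : 0 < c3) (c4_gt0 : 0 < c4) (D_gt0 : 0 < D).

(* [gauss_weight j] bounds exp(-d^2 / (c4 i)) as soon as 4^(j-1) i < d^2. *)
Definition gauss_weight (j : nat) : R :=
  if j is j'.+1 then expR (- (4 ^ j')%:R / c4) else 1.

Definition dyadic_coef (j : nat) : R := c3 * gauss_weight j * D ^+ j.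

Lemma gauss_weight_gt0 j : 0 < gauss_weight j.
Proof. by case: j => [|j] /=; rewrite ?ltr01 ?expR_gt0. Qed.

Lemma dyadic_coef_gt0 j : 0 < dyadic_coef j.
Proof. by rewrite /dyadic_coef !mulr_gt0 ?gauss_weight_gt0 ?exprn_gt0. Qed.

Lemma gauss_weight_ge (g i j : nat) : (0 < i)%N ->
  (forall k, (k < j)%N -> (4 ^ k * i < g ^ 2)%N) ->
  expR (- g%:R ^+ 2 / (c4 * i%:R)) <= gauss_weight j.
Proof.
move=> i_gt0 below; have c4i_gt0 : 0 < c4 * i%:R by rewrite mulr_gt0 ?ltr0n.
case: j below => [|j] below /=.
  by rewrite expR_le1 mulNr oppr_le0 divr_ge0 ?sqr_ge0 ?ltW.
rewrite ler_expR !mulNr lerN2.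
have -> : (4 ^ j)%:R / c4 = (4 ^ j * i)%N%:R / (c4 * i%:R).
  by rewrite natrM invfM (mulrC c4^-1) mulrA mulfK ?pnatr_eq0 -?lt0n.
by rewrite ler_pM2r ?invr_gt0// -natrX ler_nat ltnW ?below.
Qed.

(* Choosing 4^k >= 2 D, the bound exp(-t) <= k! / t^k with t = 4^(j-1) / c4
   beats the growth of D^j by a factor 2^-j. *)
Lemma dyadic_coef_le_geometric :
  exists2 A : R, 0 < A & forall j, dyadic_coef j <= A * 2^-1 ^+ j.
Proof.
have [k D_le] : exists k : nat, 2 * D <= 4 ^+ k.
  set n := Num.Def.archi_bound (2 * D).
  have D_lt : 2 * D < n%:R by apply: archi_boundP; rewrite mulr_ge0// ltW.
  exists n; apply/ltW/(lt_le_trans D_lt).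
  by rewrite -natrX ler_nat ltnW// ltn_expl.
set B := k`!%:R * (4 * c4) ^+ k.
have B_ge0 : 0 <= B by rewrite mulr_ge0 ?exprn_ge0 ?mulr_ge0 ?ltW.
exists (c3 * (1 + B)) => [|j]; first by rewrite mulr_gt0// ltr_pwDl.
rewrite exprVn ler_pdivlMr ?exprn_gt0// /dyadic_coef -!mulrA ler_pM2l//.
case: j => [|j]; first by rewrite /= !expr0 !mul1r lerDl.
set t := (4 ^ j)%:R / c4.
have t_gt0 : 0 < t by rewrite divr_gt0 ?ltr0n ?expn_gt0.
have gauss_le : gauss_weight j.+1 <= k`!%:R / t ^+ k.
  by rewrite [gauss_weight _]/= mulNr -/t; exact: expRN_le_fact.
have pow_le : D ^+ j.+1 * 2 ^+ j.+1 <= (4 ^+ k) ^+ j.+1.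
  by rewrite -exprMn mulrC lerXn2r// nnegrE ?exprn_ge0// mulr_ge0// ltW.
apply: le_trans (ler_pM (ltW (gauss_weight_gt0 _)) _ gauss_le pow_le) _.
  by rewrite mulr_ge0 ?exprn_ge0 ?ltW.
have -> : (4 ^+ k) ^+ j.+1 = 4 ^+ k * t ^+ k * c4 ^+ k :> R.
  rewrite -mulrA -exprMn /t divfK ?gt_eqF// natrX -!exprM -exprD.
  by rewrite mulnS [(k * j)%N]mulnC.
have tk_neq0 : t ^+ k != 0 by rewrite expf_neq0 ?gt_eqF.
rewrite ler_wpDl//.
by rewrite [4 ^+ k * _]mulrC -!mulrA mulKf// /B exprMn.
Qed.

Lemma esum_dyadic_coef_le :
  exists2 S : R, 0 < S & (\esum_(j in [set: nat]) (dyadic_coef j)%:E <= S%:E)%E.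
Proof.
have [A A_gt0 geo] := dyadic_coef_le_geometric.
have half_lt1 : (2^-1 : R) < 1 by rewrite invf_lt1 ?ltr1n.
have half_gt0 : (0 : R) < 2^-1 by rewrite invr_gt0.
exists (A * (1 - 2^-1)^-1); first by rewrite mulr_gt0 ?invr_gt0 ?subr_gt0.
rewrite -nneseries_esumT; last by move=> j; rewrite lee_fin ltW ?dyadic_coef_gt0.
apply: lime_le; first by apply: is_cvg_nneseries => j _ _; rewrite lee_fin ltW ?dyadic_coef_gt0.
apply: nearW => N; rewrite sumEFin lee_fin.
apply: le_trans (geometric_le_lim N (ltW A_gt0) half_gt0 _); last by rewrite gtr0_norm.
by rewrite /series /=; apply: ler_sum => j _; exact: geo.
Qed.

End dyadic_coefficients.

Section random_walk.
Variables (R : realType) (V : choiceType) (adj : V -> V -> Prop)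
  (mu : V -> V -> R) (pi : V -> R).
Hypotheses (wg : weighted_graph adj mu pi) (cw : controlled_weights adj mu pi)
  (ul : uniformly_lazy adj mu pi).
Local Notation P := (Kker adj mu pi).
Local Notation Pn := (Kpow adj mu pi).
Local Notation Vb := (Vball adj pi).
Local Notation sq n := (Num.sqrt (n%:R : R)).

Lemma pi_gt0 x : 0 < pi x.
Proof. by case: wg => _ [_ [_ [_ [_ [_ [pi0 _]]]]]]. Qed.

Lemma adj_sym x y : adj x y -> adj y x.
Proof. by case: wg => _ [_ [sym _]]; apply: sym. Qed.

Lemma graph_connected : connected_graph adj.
Proof. by case: wg => _ [_ [_ [conn _]]]. Qed.

Lemma mu_neq0_adj x y : mu x y != 0 -> adj x y.
Proof. by case: wg => _ [_ [_ [_ [_ [supp _]]]]] /supp. Qed.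

Lemma mu_eq0 x y : ~ adj x y -> mu x y = 0.
Proof. by move=> nxy; have [//|/mu_neq0_adj/nxy] := eqVneq (mu x y) 0. Qed.

Lemma nbr_sum_le x : (nbr_sum adj mu x <= (pi x)%:E)%E.
Proof. by case: wg => _ [_ [_ [_ [_ [_ [_ le_pi]]]]]]. Qed.

Lemma mu_ge0 x y : 0 <= mu x y.
Proof.
have [axy|naxy] := pselect (adj x y); last by rewrite mu_eq0.
case: cw => Cc [Cc1 lowb]; have Cc0 : 0 < Cc := lt_trans ltr01 Cc1.
have inv_gt0 : 0 < 1 / Cc by rewrite divr_gt0.
have := lt_le_trans inv_gt0 (lowb _ _ axy).
by rewrite pmulr_lgt0 ?invr_gt0 ?pi_gt0 // => /ltW.
Qed.

Lemma Kker_offdiag x y : x != y -> P x y = mu x y / pi x.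
Proof. by rewrite /Kker => /negPf ->. Qed.

Lemma Kker_diag_gt0 x : 0 < P x x.
Proof. by case: ul => Ce [Ce0 _ lazy]; exact: lt_le_trans Ce0 (lazy x). Qed.

Lemma Kker_ge0 x y : 0 <= P x y.
Proof.
have [<-|xy] := eqVneq x y; first exact/ltW/Kker_diag_gt0.
by rewrite Kker_offdiag// divr_ge0 ?mu_ge0 ?ltW ?pi_gt0.
Qed.

Lemma Kker_neq0_adj x y : x != y -> P x y != 0 -> adj x y.
Proof.
move=> xy; rewrite Kker_offdiag//; apply: contraNP => nxy.
by rewrite mu_eq0// mul0r.
Qed.

Lemma Kker_row_le1 x : (\esum_(y in [set: V]) (P x y)%:E <= 1)%E.
Proof.
have P0 y : (0 <= (P x y)%:E)%E by rewrite lee_fin Kker_ge0.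
rewrite (esumID [set x]) // !setTI esum_set1//.
have nbr0 : (0 <= nbr_sum adj mu x)%E by apply: esum_ge0 => y _; rewrite lee_fin mu_ge0.
have offdiag : (\esum_(y in ~` [set x]) (P x y)%:E <=
    (pi x)^-1%:E * nbr_sum adj mu x)%E.
  rewrite (eq_esum (b := fun y => ((pi x)^-1%:E * (mu x y)%:E)%E)); last first.
    by move=> y /eqP; rewrite eq_sym => /Kker_offdiag ->; rewrite -EFinM mulrC.
  have pi_inv_ge0 : 0 <= (pi x)^-1 by rewrite invr_ge0 ltW ?pi_gt0.
  have mu0 y : (0 <= (mu x y)%:E)%E by rewrite lee_fin mu_ge0.
  rewrite esumZl//; apply: lee_wpmul2l; first by rewrite lee_fin.
  rewrite (esumID [set y | adj x y])// [X in (_ + X)%E]esum1 ?adde0; last first.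
    by move=> y [_ /mu_eq0 ->].
  by apply: le_esum_subset => // y [].
apply: le_trans (leeD2l _ offdiag) _.
rewrite -(fineK_le nbr0 (nbr_sum_le x)) /Kker eqxx -EFinM -EFinD lee_fin.
by rewrite mulrC subrK.
Qed.

Lemma Kpow_ge0 n x y : (0 <= Pn n x y)%E.
Proof.
elim: n y => [|n IH] y /=; first by rewrite lee_fin; case: eqP.
by apply: esum_ge0 => z _; rewrite mule_ge0 ?lee_fin ?Kker_ge0.
Qed.

Lemma Kpow_row_le1 n x : (\esum_(y in [set: V]) Pn n x y <= 1)%E.
Proof.
elim: n => [|n IH] /=.
  rewrite (esumID [set x]); last by move=> y _; rewrite lee_fin; case: eqP.
  rewrite setTI esum_set1 ?eqxx// esum1 ?adde0// => y [_ /eqP].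
  by rewrite eq_sym => /negPf ->.
rewrite exchange_esum; last by move=> z y _ _; rewrite mule_ge0 ?Kpow_ge0 ?lee_fin ?Kker_ge0.
apply: le_trans (IH); apply: le_esum => z _.
have Pn_le1 : (Pn n x z <= 1)%E.
  by apply: le_trans IH; apply: (le_term_esum (a := Pn n x)) => // *; exact: Kpow_ge0.
rewrite -(fineK_le (Kpow_ge0 n x z) Pn_le1) esumZl ?fine_ge0 ?Kpow_ge0//; last first.
  by move=> y _; rewrite lee_fin Kker_ge0.
by rewrite -[leRHS]mule1 lee_wpmul2l ?Kker_row_le1// lee_fin fine_ge0 ?Kpow_ge0.
Qed.

Lemma Kpow_le1 n x y : (Pn n x y <= 1)%E.
Proof.
apply: le_trans (Kpow_row_le1 n x).
by apply: (le_term_esum (a := Pn n x)) => // *; exact: Kpow_ge0.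
Qed.

Lemma Kpow_fineK n x y : (fine (Pn n x y))%:E = Pn n x y.
Proof. exact: fineK_le (Kpow_ge0 n x y) (Kpow_le1 n x y). Qed.

Lemma Kpow_diag_gt0 n x : 0 < fine (Pn n x x).
Proof.
elim: n => [|n IH]; first by rewrite /= eqxx ltr01.
rewrite -lte_fin Kpow_fineK /=.
apply: (@lt_le_trans _ _ (Pn n x x * (P x x)%:E)%E).
  by rewrite -Kpow_fineK -EFinM lte_fin mulr_gt0 ?Kker_diag_gt0.
apply: (le_term_esum (a := fun z => Pn n x z * (P z x)%:E)%E) => // z _.
by rewrite mule_ge0 ?Kpow_ge0 ?lee_fin ?Kker_ge0.
Qed.

Lemma Kpow_neq0_reach n x y : Pn n x y != 0%E -> exists2 m, (m <= n)%N & reach adj x y m.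
Proof.
elim: n y => [|n IH] y /=.
  have [<- _|xy] := eqVneq x y; first by exists 0%N => //; exact: reach_refl.
  by rewrite /= ?mulr0n eqxx.
move=> Pn_neq0.
have [z Pnz] : exists z, (Pn n x z * (P z y)%:E)%E != 0%E.
  apply: contrapT => all0; move: Pn_neq0; rewrite esum1 ?eqxx// => z _.
  by apply/eqP; apply: contrapT => nz; apply: all0; exists z; apply/negP.
have Pn_xz : Pn n x z != 0%E by apply: contra Pnz => /eqP ->; rewrite mul0e.
have [m mn rm] := IH z Pn_xz.
have [<-|zy] := eqVneq z y; first by exists m => //; rewrite ltnW.
exists m.+1 => //; apply: reach_rcons rm (Kker_neq0_adj zy _).
by apply: contra Pnz => /eqP ->; rewrite mule0.
Qed.

Lemma Kpow_heat n x y : fine (Pn n x y) = heat adj mu pi n x y * pi y.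
Proof. by rewrite /heat divfK// gt_eqF// pi_gt0. Qed.

Lemma heat_diag_gt0 n x : 0 < heat adj mu pi n x x.
Proof. by rewrite /heat divr_gt0 ?pi_gt0 ?Kpow_diag_gt0. Qed.

Lemma vol_ge0 (A : set V) : (0 <= vol pi A)%E.
Proof. by apply: esum_ge0 => y _; rewrite lee_fin ltW ?pi_gt0. Qed.

(* [Vball] is [fine] of a possibly infinite volume, hence 0 when that volume is
   infinite; an upper heat kernel bound rules this junk value out. *)
Lemma Vball_gt0_of_heat n x r (c e : R) :
  heat adj mu pi n x x <= c / Vb x r * e -> 0 < Vb x r.
Proof.
move=> ub; rewrite lt_neqAle fine_ge0 ?vol_ge0 // andbT eq_sym.
by apply: contraTneq ub => ->; rewrite invr0 mulr0 mul0r -ltNge heat_diag_gt0.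
Qed.

Lemma Vball_fineK x r : 0 < Vb x r -> (Vb x r)%:E = vol pi (gball adj x r).
Proof. by move=> /gt_eqF/negbT/fineK_neq0. Qed.

Lemma vol_gball_setI_fineK x r (A : set V) : 0 < Vb x r ->
  (fine (vol pi (gball adj x r `&` A)))%:E = vol pi (gball adj x r `&` A).
Proof.
move=> V_gt0; apply: (@fineK_le _ _ (Vb x r) (vol_ge0 _)); rewrite Vball_fineK//.
by apply: le_esum_subset => [z []|z _] //; rewrite lee_fin ltW ?pi_gt0.
Qed.

Lemma vol_le_Kpow_lower n x (A : set V) (c : R) : 0 <= c ->
  (forall y, A y -> c * pi y <= fine (Pn n x y)) -> (c%:E * vol pi A <= 1)%E.
Proof.
move=> c0 low; rewrite /vol -esumZl//; last by move=> y _; rewrite lee_fin ltW ?pi_gt0.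
apply: le_trans (Kpow_row_le1 n x).
apply: (@le_trans _ _ (\esum_(y in A) Pn n x y)%E).
  by apply: le_esum => y Ay; rewrite -Kpow_fineK// -EFinM lee_fin low.
by apply: le_esum_subset => // y _; exact: Kpow_ge0.
Qed.

Lemma gdist_le_of_sqr_le g n : (2 <= n)%N -> (g ^ 2 <= 4 * n)%N -> (g <= n)%N.
Proof. by move=> n2 gn; nia. Qed.

(* The Gaussian lower bound at time n bounds K^n(x, .) from below on B(x, 2 sqrt n),
   and K^n(x, .) has total mass at most 1. *)
Lemma harnack_doubling : harnack_graph adj mu pi -> exists2 D : R, 0 < D &
  forall x n, (2 <= n)%N -> Vb x (sq (4 * n)%N) <= D * Vb x (sq n).
Proof.
case=> c1 [c2 [c3 [c4 [c1_gt0 c2_gt0 _ _ gauss]]]].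
exists (expR (4 / c2) / c1); first by rewrite divr_gt0 ?expR_gt0.
move=> x n n2.
have Vball_gt0 m : 0 < Vb x (sq m).
  apply: (@Vball_gt0_of_heat m _ _ c3 (expR (- (gdist adj x x)%:R ^+ 2 / (c4 * m%:R)))).
  have d0 : (gdist adj x x <= m)%N by rewrite (gdist_refl graph_connected).
  by have [] := gauss m x x d0.
set c := c1 * expR (- (4 / c2)) / Vb x (sq n).
have c_gt0 : 0 < c by rewrite !mulr_gt0 ?expR_gt0 ?invr_gt0.
have low y : gball adj x (sq (4 * n)%N) y -> c * pi y <= fine (Pn n x y).
  move=> /gball_sqrt d2; have [lower _] := gauss n x y (gdist_le_of_sqr_le n2 d2).
  rewrite Kpow_heat ler_pM2r ?pi_gt0//; apply: le_trans lower.
  rewrite /c mulrAC ler_pM2l ?divr_gt0// ler_expR mulNr lerN2.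
  have n_gt0 : (0 < n%:R :> R) by rewrite ltr0n (leq_trans _ n2).
  by rewrite ler_pdivrMr ?mulr_gt0// mulrA divfK ?gt_eqF// -natrX -natrM ler_nat.
have := vol_le_Kpow_lower (ltW c_gt0) low.
rewrite -Vball_fineK// -EFinM lee_fin -ler_pdivlMl// mulr1 => /le_trans; apply.
by rewrite /c !invfM invrK expRN invrK (mulrC c1^-1).
Qed.

Fixpoint path_weight (a : V) (s : seq V) : R :=
  if s is b :: t then P a b * path_weight b t else 1.

Lemma path_weight_ge0 a s : 0 <= path_weight a s.
Proof. by elim: s a => [|b t IH] a /=; rewrite ?ler01 ?mulr_ge0 ?Kker_ge0. Qed.

Lemma path_weight_rcons a s z :
  path_weight a (rcons s z) = path_weight a s * P (last a s) z.
Proof. by elim: s a => [|b t IH] a /=; rewrite ?mulr1 ?mul1r ?IH ?mulrA. Qed.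

Lemma prod_tnth_path_weight n (p : n.+1.-tuple V) :
  \prod_(i < n) P (tnth p (inord i)) (tnth p (inord i.+1)) =
  path_weight (tnth p ord0) (behead p).
Proof.
set a := tnth p ord0.
have prod_nth b s :
    \prod_(i < size s) P (nth a (b :: s) i) (nth a (b :: s) i.+1) = path_weight b s.
  by elim: s b => [|c s IH] b /=; rewrite ?big_ord0 ?big_ord_recl /= ?IH.
have p_eta : val p = a :: behead p by rewrite {1}(tuple_eta p).
rewrite -prod_nth size_behead size_tuple -p_eta; apply: eq_bigr => i _.
by rewrite !(tnth_nth a) !inordK// ltnS// ltnW.
Qed.

Lemma esum_rcons_last a t y :
  (\esum_(z in [set z | last a (rcons t z) = y]) (path_weight a (rcons t z))%:E
   = (path_weight a t * P (last a t) y)%:E)%E.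
Proof.
rewrite (_ : [set z | _] = [set y]); last by apply/seteqP; split => z /=; rewrite last_rcons.
by rewrite esum_set1 ?path_weight_rcons// lee_fin mulr_ge0 ?path_weight_ge0 ?Kker_ge0.
Qed.

Lemma esum_path_weight_le_Kpow n a y :
  (\esum_(s in [set s : seq V | size s = n /\ last a s = y]) (path_weight a s)%:E
     <= Pn n a y)%E.
Proof.
elim: n a y => [|n IH] a y.
  have [<-|ay] := eqVneq a y.
    rewrite (_ : [set s : seq V | _] = [set [::]]) ?esum_set1 ?lee_fin ?eqxx//.
    by apply/seteqP; split => [s [/size0nil ->]|s ->].
  rewrite esum1 ?Kpow_ge0// => s [/size0nil -> /= ay'].
  by move: ay; rewrite ay' eqxx.
have w0 s : (0 <= (path_weight a s)%:E)%E by rewrite lee_fin path_weight_ge0.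
rewrite (esum_rcons n (fun s => last a s = y))// (eq_esum (fun t _ => esum_rcons_last a t y)).
rewrite (esum_fibers (last a)) /=; last first.
  by move=> t _; rewrite lee_fin mulr_ge0 ?path_weight_ge0 ?Kker_ge0.
apply: le_esum => w _.
rewrite (eq_esum (b := fun t => ((path_weight a t)%:E * (P w y)%:E)%E)); last first.
  by move=> t [_ ->]; rewrite EFinM.
by rewrite esumZr ?Kker_ge0// lee_wpmul2r ?lee_fin ?Kker_ge0.
Qed.

Lemma esum_path_weight_step n a y :
  (\esum_(t in [set t : seq V | size t = n]) (path_weight a t * P (last a t) y)%:E
     <= Pn n.+1 a y)%E.
Proof.
apply: le_trans (esum_path_weight_le_Kpow n.+1 a y).
rewrite (esum_rcons n (fun s => last a s = y)); last by move=> s; rewrite lee_fin path_weight_ge0.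
by apply: le_esum => t _; rewrite esum_rcons_last.
Qed.

Lemma esum_path_weight_rcons_le a t (S : set V) :
  (\esum_(z in S) (path_weight a (rcons t z))%:E <= (path_weight a t)%:E)%E.
Proof.
have w0 : 0 <= path_weight a t by exact: path_weight_ge0.
under eq_esum do rewrite path_weight_rcons EFinM.
rewrite esumZl//; last by move=> z _; rewrite lee_fin Kker_ge0.
rewrite -[leRHS]mule1 lee_wpmul2l ?lee_fin//.
apply: le_trans (Kker_row_le1 (last a t)).
by apply: le_esum_subset => // z _; rewrite lee_fin Kker_ge0.
Qed.

Section hitting.
Variables (K : set V) (x : V).
Hypothesis x_notin_K : ~ K x.

(* [s] lists X_1, ..., X_n; the start X_0 = x is implicit. *)
Definition hit_paths n := [set s : seq V | size s = n /\ exists2 y, y \in x :: s & K y].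

Local Notation hit_mass n := (\esum_(s in hit_paths n) (path_weight x s)%:E)%E.
Local Notation boundary_mass i := (\esum_(z in dGamma adj K) Pn i x z)%E.

Lemma hit_within_paths n : hit_within adj mu pi K n x = hit_mass n.
Proof.
have p_eta (p : n.+1.-tuple V) : val p = tnth p ord0 :: behead p.
  by rewrite {1}(tuple_eta p).
rewrite /hit_within (reindex_esum [set p : n.+1.-tuple V |
  tnth p ord0 = x /\ exists i, K (tnth p i)] (hit_paths n) (fun p => behead p)).
  by apply: eq_esum => p [p0 _]; rewrite prod_tnth_path_weight p0.
split.
- move=> p [p0 [i Ki]]; split; first by rewrite size_behead size_tuple.
  by exists (tnth p i) => //; rewrite -p0 -p_eta mem_tnth.
- move=> p q /set_mem [p0 _] /set_mem [q0 _] /= e.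
  by apply: val_inj; rewrite /= p_eta (p_eta q) p0 q0 e.
- move=> s [ss [y ys Ky]].
  have sz : size (x :: s) == n.+1 by rewrite /= ss.
  exists (Tuple sz) => //; split; first by rewrite (tnth_nth x).
  by have [i ei] := tnthP (Tuple sz) y ys; exists i; rewrite -ei.
Qed.

Lemma hit_mass0 : hit_mass 0 = 0%E.
Proof. by apply: esum1 => s [/size0nil -> [y]]; rewrite inE => /eqP -> /x_notin_K. Qed.

Lemma Kker_into_K_eq0 a z : ~ K a -> K z -> ~ dGamma adj K z -> P a z = 0.
Proof.
move=> Ka Kz; apply: contra_notP => Paz; split => //; exists a; split => //.
apply/adj_sym/Kker_neq0_adj; last exact/eqP.
by apply/eqP => az; apply: Ka; rewrite az.
Qed.

Lemma esum_first_hit_le t : ~ (exists2 y, y \in x :: t & K y) ->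
  (\esum_(z in [set z | exists2 y, y \in x :: rcons t z & K y])
      (path_weight x (rcons t z))%:E
   <= \esum_(z in dGamma adj K) (path_weight x t * P (last x t) z)%:E)%E.
Proof.
move=> no_hit.
have last_notin_K : ~ K (last x t).
  by move=> Kl; apply: no_hit; exists (last x t); rewrite ?mem_last.
have w0 z : (0 <= (path_weight x t * P (last x t) z)%:E)%E.
  by rewrite lee_fin mulr_ge0 ?path_weight_ge0 ?Kker_ge0.
under eq_esum do rewrite path_weight_rcons.
rewrite (esumID (dGamma adj K))// [X in (_ + X)%E]esum1 ?adde0; last first.
  move=> z [[y] /= + Ky ndz]; rewrite -rcons_cons mem_rcons inE => /orP[/eqP yz|y_in].
    by rewrite (Kker_into_K_eq0 last_notin_K _ ndz) ?mulr0// -yz.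
  by case: no_hit; exists y.
by apply: le_esum_subset => // z [].
Qed.

Lemma hit_mass_rec n : (hit_mass n.+1 <= hit_mass n + boundary_mass n.+1)%E.
Proof.
set hit := fun s : seq V => exists2 y, y \in x :: s & K y.
have w0 s : (0 <= (path_weight x s)%:E)%E by rewrite lee_fin path_weight_ge0.
have step0 t z : (0 <= (path_weight x t * P (last x t) z)%:E)%E.
  by rewrite lee_fin mulr_ge0 ?path_weight_ge0 ?Kker_ge0.
rewrite /hit_paths (esum_rcons n hit)// (esumID hit); last by move=> t _; exact: esum_ge0.
apply: leeD.
  apply: (@le_trans _ _ (\esum_(t in [set t : seq V | size t = n] `&` hit)
      (path_weight x t)%:E)%E).
    by apply: le_esum => t _; exact: esum_path_weight_rcons_le.
  by apply: le_esum_subset => // t [].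
apply: (@le_trans _ _ (\esum_(t in [set t : seq V | size t = n] `&` ~` hit)
    \esum_(z in dGamma adj K) (path_weight x t * P (last x t) z)%:E)%E).
  by apply: le_esum => t [_ no_hit]; exact: esum_first_hit_le.
apply: (@le_trans _ _ (\esum_(t in [set t : seq V | size t = n])
    \esum_(z in dGamma adj K) (path_weight x t * P (last x t) z)%:E)%E).
  by apply: le_esum_subset => [t []|t _] //; exact: esum_ge0.
by rewrite exchange_esum//; apply: le_esum => z _; exact: esum_path_weight_step.
Qed.

Lemma hit_mass_le n : (hit_mass n <= \sum_(i < n.+1) boundary_mass i)%E.
Proof.
elim: n => [|n IH].
  by rewrite hit_mass0 sume_ge0// => i _; apply: esum_ge0 => z _; exact: Kpow_ge0.
by apply: le_trans (hit_mass_rec n) _; rewrite big_ord_recr leeD2r.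
Qed.

Lemma psiK_le_boundary_mass :
  (psiK adj mu pi K x <= \esum_(i in [set: nat]) boundary_mass i)%E.
Proof.
have mass0 i : (0 <= boundary_mass i)%E by apply: esum_ge0 => z _; exact: Kpow_ge0.
apply: ge_ereal_sup => _ [n _ <-]; rewrite hit_within_paths.
apply: le_trans (hit_mass_le n) _.
rewrite -nneseries_esumT// -(big_mkord xpredT (fun i => boundary_mass i)).
exact: nneseries_lim_ge.
Qed.

End hitting.

Section dyadic_decomposition.
Variables (c3 c4 D : R).
Hypotheses (c3_gt0 : 0 < c3) (c4_gt0 : 0 < c4) (D_gt0 : 0 < D).
Hypothesis heat_upper : forall n y z, (gdist adj y z <= n)%N ->
  heat adj mu pi n y z <= c3 / Vb y (sq n) * expR (- (gdist adj y z)%:R ^+ 2 / (c4 * n%:R)).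
Hypothesis doubling : forall y n, (2 <= n)%N -> Vb y (sq (4 * n)%N) <= D * Vb y (sq n).
Variables (K : set V) (x : V).
Hypotheses (x_notin_K : ~ K x) (x_notin_dIGamma : ~ dIGamma adj K x).
Local Notation coef := (dyadic_coef c3 c4 D).
Local Notation iW n := (invW adj pi K x (sq n)).
Local Notation invW_mass := (\esum_(n in [set: nat]) (iW n)%:E)%E.
Let coef_gt0 j : 0 < coef j. Proof. by apply: dyadic_coef_gt0. Qed.

Lemma Vball_sqrt_gt0 y n : 0 < Vb y (sq n).
Proof.
have d0 : (gdist adj y y <= n)%N by rewrite (gdist_refl graph_connected).
exact: Vball_gt0_of_heat (heat_upper d0).
Qed.

Lemma Vball_iter_doubling j m : (2 <= m)%N ->
  Vb x (sq (4 ^ j * m)%N) <= D ^+ j * Vb x (sq m).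
Proof.
move=> m2; elim: j => [|j IH]; first by rewrite expn0 mul1n expr0 mul1r.
rewrite expnS -mulnA exprS -mulrA; apply: le_trans (doubling _ _) _.
  by apply: leq_trans m2 _; rewrite leq_pmull// expn_gt0.
by rewrite ler_pM2l.
Qed.

Lemma invW_ge0 n : 0 <= iW n.
Proof. by rewrite /invW divr_ge0 ?fine_ge0 ?vol_ge0 ?ltW ?Vball_sqrt_gt0. Qed.

Lemma Kpow_small_to_K_eq0 i y : (i <= 1)%N -> K y -> Pn i x y = 0%E.
Proof.
move=> i_le1 Ky; have xy : x != y by apply/eqP => e; apply: x_notin_K; rewrite e.
case: i i_le1 => [|[|//]] _ /=; first by rewrite (negPf xy).
apply: esum1 => z _; have [<-|//] := eqVneq x z; last by rewrite mul0e.
have [->|Pxy] := eqVneq (P x y) 0; first by rewrite mule0.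
by case: x_notin_dIGamma; split => //; exists y; split => //; exact: Kker_neq0_adj.
Qed.

Definition dyadic_term j i y : \bar R :=
  ((coef j / Vb x (sq (4 ^ j * i)%N))%:E *
   (if y \in gball adj x (sq (4 ^ j * i)%N) then (pi y)%:E else 0))%E.

Lemma dyadic_term_ge0 j i y : (0 <= dyadic_term j i y)%E.
Proof.
have coef_ge0 : 0 <= coef j / Vb x (sq (4 ^ j * i)%N).
  by rewrite divr_ge0 ?(ltW (coef_gt0 j)) ?(ltW (Vball_sqrt_gt0 _ _)).
rewrite /dyadic_term mule_ge0 ?lee_fin//.
by case: ifP => _ //; rewrite lee_fin; exact/ltW/pi_gt0.
Qed.

Lemma Kpow_le_dyadic_term i y j : (2 <= i)%N -> (gdist adj x y <= i)%N ->
  (gdist adj x y ^ 2 <= 4 ^ j * i)%N ->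
  (forall k, (k < j)%N -> (4 ^ k * i < gdist adj x y ^ 2)%N) ->
  (Pn i x y <= dyadic_term j i y)%E.
Proof.
move=> i2 di in_ball below; have i_gt0 : (0 < i)%N by apply: leq_trans i2.
rewrite /dyadic_term ifT; last by rewrite inE; apply/gball_sqrt.
rewrite -Kpow_fineK Kpow_heat -EFinM lee_fin ler_pM2r ?pi_gt0//.
apply: le_trans (heat_upper di) _.
apply: (@le_trans _ _ (c3 / Vb x (sq i) * gauss_weight c4 j)).
  by rewrite ler_pM2l ?divr_gt0 ?Vball_sqrt_gt0// gauss_weight_ge.
rewrite /dyadic_coef -!mulrA ler_pM2l// mulrC ler_pM2l ?gauss_weight_gt0//.
rewrite ler_pdivlMr ?Vball_sqrt_gt0// mulrC ler_pdivrMr ?Vball_sqrt_gt0//.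
exact: Vball_iter_doubling.
Qed.

Lemma Kpow_le_esum_dyadic i y : dGamma adj K y ->
  (Pn i x y <= \esum_(j in [set: nat]) dyadic_term j i y)%E.
Proof.
move=> [Ky _]; have term_ge0 j : [set: nat] j -> (0 <= dyadic_term j i y)%E.
  by move=> _; exact: dyadic_term_ge0.
case: (leqP i 1) => [i_le1|i2]; first by rewrite Kpow_small_to_K_eq0// esum_ge0.
have [->|Pn_neq0] := eqVneq (Pn i x y) 0%E; first exact: esum_ge0.
have [m mi reach_m] := Kpow_neq0_reach Pn_neq0.
have di : (gdist adj x y <= i)%N := leq_trans (gdist_le graph_connected reach_m) mi.
have ex : exists j, (gdist adj x y ^ 2 <= 4 ^ j * i)%N.
  exists (gdist adj x y ^ 2)%N; apply: leq_trans (ltnW (ltn_expl _ (isT : (1 < 4)%N))) _.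
  by rewrite leq_pmulr// (leq_trans _ i2).
case: (ex_minnP ex) => j in_ball minj.
apply: (le_trans _ (le_term_esum (a := fun j => dyadic_term j i y) (x := j) I term_ge0)).
apply: Kpow_le_dyadic_term => // k kj; rewrite ltnNge; apply/negP => /minj.
by rewrite leqNgt kj.
Qed.

Lemma esum_dyadic_term_boundary j i :
  (\esum_(y in dGamma adj K) dyadic_term j i y = (coef j * iW (4 ^ j * i)%N)%:E)%E.
Proof.
rewrite /dyadic_term esumZl; last 2 first.
- by rewrite divr_ge0 ?(ltW (coef_gt0 _)) ?(ltW (Vball_sqrt_gt0 _ _)).
- by move=> y _; case: ifP => _ //; rewrite lee_fin; exact/ltW/pi_gt0.
rewrite -esum_mkcondl -/(vol pi _) -vol_gball_setI_fineK ?Vball_sqrt_gt0// -EFinM /invW.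
by rewrite mulrA mulrAC.
Qed.

Lemma esum_dyadic_scale j :
  (\esum_(i in [set: nat]) (coef j * iW (4 ^ j * i)%N)%:E <= (coef j)%:E * invW_mass)%E.
Proof.
under eq_esum do rewrite EFinM.
have coef_ge0 : 0 <= coef j by rewrite ltW ?coef_gt0.
rewrite esumZl//; last by move=> i _; rewrite lee_fin invW_ge0.
rewrite lee_wpmul2l ?lee_fin//.
rewrite -(esum_image [set: nat] (fun i => (4 ^ j * i)%N) (fun n => (iW n)%:E)).
  by apply: le_esum_subset => // n _; rewrite lee_fin invW_ge0.
by move=> a b _ _ /eqP; rewrite eqn_pmul2l ?expn_gt0// => /eqP.
Qed.

Lemma esum_boundary_mass_le :
  (\esum_(i in [set: nat]) \esum_(y in dGamma adj K) Pn i x y <=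
   \esum_(j in [set: nat]) ((coef j)%:E * invW_mass))%E.
Proof.
apply: (@le_trans _ _ (\esum_(i in [set: nat]) \esum_(y in dGamma adj K)
   \esum_(j in [set: nat]) dyadic_term j i y)%E).
  by apply: le_esum => i _; apply: le_esum => y; exact: Kpow_le_esum_dyadic.
apply: (@le_trans _ _ (\esum_(i in [set: nat]) \esum_(j in [set: nat])
   (coef j * iW (4 ^ j * i)%N)%:E)%E).
  apply: le_esum => i _; rewrite exchange_esum; last by move=> *; exact: dyadic_term_ge0.
  by apply: le_esum => j _; rewrite esum_dyadic_term_boundary.
rewrite exchange_esum; last first.
  by move=> *; rewrite lee_fin mulr_ge0 ?invW_ge0 ?(ltW (coef_gt0 _)).
by apply: le_esum => j _; exact: esum_dyadic_scale.
Qed.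

Lemma invW_eq0 n : (n < distK adj K x ^ 2)%N -> iW n = 0.
Proof.
move=> n_lt; rewrite /invW /vol esum1 ?mul0r// => y [/gball_sqrt d2 [Ky _]].
have := distK_le adj x Ky; nia.
Qed.

Lemma invW_series_esum :
  (\sum_((distK adj K x ^ 2)%N <= n <oo) (iW n)%:E = invW_mass)%E.
Proof.
rewrite eseries_cond nneseries_esum; last by move=> *; rewrite lee_fin invW_ge0.
rewrite (esumID [set n | (distK adj K x ^ 2 <= n)%N] [set: nat]); last first.
  by move=> *; rewrite lee_fin invW_ge0.
rewrite [X in (_ + X)%E]esum1 ?adde0 ?setTI//.
by move=> n n_lt; rewrite invW_eq0// ltnNge; exact/negP.
Qed.

Lemma psiK_le_invW_series S : 0 < S ->
  (\esum_(j in [set: nat]) (coef j)%:E <= S%:E)%E ->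
  (psiK adj mu pi K x <= \sum_((distK adj K x ^ 2)%N <= n <oo) (S * iW n)%:E)%E.
Proof.
move=> S_gt0 coef_le.
rewrite (eq_eseriesr (fun n _ => EFinM S (iW n))) nneseriesZl; last first.
  by move=> n _; rewrite lee_fin invW_ge0.
rewrite invW_series_esum; apply: le_trans (psiK_le_boundary_mass x_notin_K) _.
apply: le_trans esum_boundary_mass_le _.
apply: esum_mule_le => //; first by apply: esum_ge0 => n _; rewrite lee_fin invW_ge0.
by move=> j _; rewrite lee_fin ltW ?coef_gt0.
Qed.

End dyadic_decomposition.

End random_walk.

Theorem theorem2p9 (R : realType) (V : choiceType)
  (adj : V -> V -> Prop) (mu : V -> V -> R) (pi : V -> R) :
  weighted_graph adj mu pi ->
  controlled_weights adj mu pi ->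
  uniformly_lazy adj mu pi ->
  harnack_graph adj mu pi ->
  forall K : set V,
  exists C : R,
  forall x : V, ~ K x -> ~ dIGamma adj K x ->
    (psiK adj mu pi K x <=
     \sum_((distK adj K x ^ 2)%N <= n <oo) (C * invW adj pi K x (Num.sqrt n%:R))%:E)%E.
Proof.
move=> wg cw ul harnack K.
have [D D_gt0 doubling] := harnack_doubling wg cw ul harnack.
have [c1 [c2 [c3 [c4 [_ _ c3_gt0 c4_gt0 gauss]]]]] := harnack.
have [S S_gt0 coef_le] := esum_dyadic_coef_le c3_gt0 c4_gt0 D_gt0.
exists S => x x_notin_K x_notin_dIGamma.
apply: (psiK_le_invW_series wg cw ul c3_gt0 c4_gt0 D_gt0 _ doubling) => //.
by move=> n y z d_le; have [] := gauss n y z d_le.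
Qed.
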